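(* For every fixed $k,K\in\mathbf{N}$, the set $\{\pi\in S:\ \mathrm{al}(\pi)<K\ \&\ s_k(\pi)<K\}$ is well partially ordered by $\prec$.
   Context: $S_n$ is the set of permutations of $[n]$, $S=\bigcup_n S_n$; $\pi\prec\rho$ means $\rho$ has a subsequence order-isomorphic to $\pi$; $\pi|A$ is the permutation order-isomorphic to the subsequence of $\pi$ at positions in $A$. A partial order is a well partial order if it has no infinite strictly descending chains and no infinite antichains. Alternating: $\sigma(\{1,3,5,\dots\})>\sigma(\{2,4,6,\dots\})$. $\mathrm{al}(\pi)$ is the maximum length of an alternating $\sigma$ with $\sigma\prec\pi$ or $\sigma\prec\pi^{-1}$. For $\sigma\in S_n,\tau\in S_m$, $\sigma\oplus\tau\in S_{n+m}$ equals $\sigma(i)$ at $i\le n$ and $n+\tau(i-n)$ at $i>n$; $\sigma\ominus\tau$ equals $m+\sigma(i)$ at $i\le n$ and $\tau(i-n)$ at $i>n$. Up-(down-)indecomposable means not of the form $\sigma\oplus\tau$ ($\sigma\ominus\tau$) with both nonempty; $h^+(\pi)$ ($h^-(\pi)$) is the maximum length of a block in the unique decomposition of $\pi$ as a $\oplus$-sum of up-indecomposables ($\ominus$-sum of down-indecomposables). $H_k^\pm=\{\pi\in S:h^\pm(\pi)<k\}$. For $k\ge2$ and $\pi\in S_n$, $s_k(\pi)$ is the number $r$ of intervals in the greedy partition $I_1<\dots<I_r$ of $[n]$ where $I_1$ is the longest initial interval with $\pi|I_1\in H_k^+\cup H_k^-$, $I_2$ the longest following interval with $\pi|I_2\in H_k^+\cup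 H_k^-$, etc.; $s_1(\pi)=\infty$ by convention. *)

(* Permutations of [n] are encoded 0-based as sequences of
   naturals: pi : seq nat with perm_eq pi (iota 0 n); value pi(i) (1-based,
   values in 1..n) corresponds to nth 0 pi (i-1) + 1. *)
From mathcomp Require Import all_boot.
Set Implicit Arguments. Unset Strict Implicit. Unset Printing Implicit Defensive.

Definition is_perm (s : seq nat) : Prop := perm_eq s (iota 0 (size s)).

Definition std (s : seq nat) : seq nat :=
  map (fun x => count (fun y => y < x) s) s.

Definition restrict (pi : seq nat) (A : bitseq) : seq nat := std (mask A pi).

Definition contains (pi rho : seq nat) : Prop :=
  exists A : bitseq, restrict rho A = pi.

Definition perm_inv (s : seq nat) : seq nat :=
  map (fun v => index v s) (iota 0 (size s)).

(* alternating: sigma({1,3,5,...}) > sigma({2,4,6,...}); 1-based odd positions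
   are 0-based even indices *)
Definition alternating (s : seq nat) : Prop :=
  forall i j, i < size s -> j < size s -> ~~ odd i -> odd j ->
    nth 0 s j < nth 0 s i.

(* al(pi) < K, where al(pi) is the maximum length of an alternating sigma
   with sigma ≺ pi or sigma ≺ pi^{-1} (the maximum exists: the empty
   permutation qualifies and lengths are bounded by |pi|). *)
Definition al_lt (pi : seq nat) (K : nat) : Prop :=
  forall sigma, is_perm sigma -> alternating sigma ->
    (contains sigma pi \/ contains sigma (perm_inv pi)) -> size sigma < K.

Definition oplus (s t : seq nat) : seq nat := s ++ map (addn (size s)) t.
Definition ominus (s t : seq nat) : seq nat := map (addn (size t)) s ++ t.

Definition up_indecomposable (pi : seq nat) : Prop :=
  ~ exists s t, s <> [::] /\ t <> [::] /\ pi = oplus s t.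
Definition down_indecomposable (pi : seq nat) : Prop :=
  ~ exists s t, s <> [::] /\ t <> [::] /\ pi = ominus s t.

(* The unique decomposition of a permutation pi as a ⊕-sum of
   up-indecomposables is obtained by cutting pi after every position i
   (1 <= i <= |pi|) such that the prefix of length i is a permutation of
   {0,...,i-1}; similarly for ⊖ with prefixes consisting of the i largest
   values.  The block lengths are the differences of consecutive cuts. *)
Definition plus_cuts (pi : seq nat) : seq nat :=
  [seq i <- iota 1 (size pi) | all (fun x => x < i) (take i pi)].
Definition minus_cuts (pi : seq nat) : seq nat :=
  [seq i <- iota 1 (size pi) | all (fun x => size pi - i <= x) (take i pi)].

Definition max_block (cuts : seq nat) : nat :=
  foldr maxn 0 (pairmap (fun a b => b - a) 0 cuts).

Definition h_plus (pi : seq nat) : nat := max_block (plus_cuts pi).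
Definition h_minus (pi : seq nat) : nat := max_block (minus_cuts pi).

Definition inH (k : nat) (pi : seq nat) : bool :=
  (h_plus pi < k) || (h_minus pi < k).

Definition longest (k : nat) (r : seq nat) : nat :=
  foldr maxn 0 [seq L <- iota 0 (size r).+1 | inH k (std (take L r))].

Fixpoint greedy (fuel k : nat) (r : seq nat) : nat :=
  match fuel with
  | 0 => 0
  | f.+1 => if r is [::] then 0 else (greedy f k (drop (longest k r) r)).+1
  end.

(* s_k(pi) for k >= 2 (for k >= 2 every step removes at least one entry,
   so fuel |pi| suffices) *)
Definition s_k (k : nat) (pi : seq nat) : nat := greedy (size pi) k pi.

(* s_k(pi) < K, with the convention s_1(pi) = infinity *)
Definition s_lt (k : nat) (pi : seq nat) (K : nat) : Prop :=
  if k <= 1 then False else s_k k pi < K.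

Definition strictly_below (pi rho : seq nat) : Prop := contains pi rho /\ pi <> rho.

Definition wpo (X : seq nat -> Prop) : Prop :=
  (~ exists f : nat -> seq nat,
       (forall n, X (f n)) /\ (forall n, strictly_below (f n.+1) (f n))) /\
  (~ exists f : nat -> seq nat,
       (forall n, X (f n)) /\
       (forall i j, i <> j -> ~ contains (f i) (f j))).

From mathcomp Require Import all_boot zify.
From Stdlib Require Import Classical ClassicalEpsilon.
Set Implicit Arguments. Unset Strict Implicit. Unset Printing Implicit Defensive.

(* Cut pi greedily into fewer than K pieces, each in H_k^+ or H_k^-, and cut every piece further
   into its ⊕- (resp. ⊖-) components: blocks of fewer than k consecutive positions.  Label each
   value by the piece holding it.  If two labels x, y occurred K times as the labels of
   consecutive values v - 1, v, these values would form an alternating pattern of length at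
   least K in pi^-1; so there are fewer than K^3 label changes, and the values fall into fewer
   than K^3 bands of consecutive values with a common label.  Values of different bands compare
   by band; values of one band lie in one piece and compare by their ranks if they share a block,
   by the order of their blocks otherwise (increasing for ⊕, decreasing for ⊖).  Hence pi is
   determined by the word of its blocks, each written as the list of (band, rank, type) of its
   entries: a word over a finite alphabet, whose subwords encode patterns of pi.  Higman's lemma
   then rules out infinite antichains, and sizes rule out infinite descending chains. *)

(** * Standardization *)

Definition rank (s : seq nat) (x : nat) : nat := count (fun y => y < x) s.

Lemma std_nth s i : i < size s -> nth 0 (std s) i = rank s (nth 0 s i).
Proof. by move=> hi; rewrite /std (nth_map 0). Qed.

Lemma count_lt_sub (T : eqType) (a b : pred T) s x :
  subpred a b -> x \in s -> b x -> ~~ a x -> count a s < count b s.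
Proof.
move=> ab; elim: s => [|y s IH] //=; rewrite inE => /predU1P[<-|xs] bx ax.
  by rewrite (negbTE ax) bx add0n add1n ltnS sub_count.
rewrite -addnS leq_add ?IH //.
by case: (a y) (ab y) => // ->.
Qed.

Lemma rank_lt s x y : x \in s -> (rank s x < rank s y) = (x < y).
Proof.
move=> xs; case: (ltnP x y) => hxy.
  by apply: (count_lt_sub (x := x)) => //= [z /ltn_trans|]; rewrite ?ltnn //; apply.
by apply/negbTE; rewrite -leqNgt sub_count // => z /= /leq_trans; apply.
Qed.

Lemma rank_lt_size s x : x \in s -> rank s x < size s.
Proof.
move=> xs; rewrite /rank -count_predT.
by apply: (count_lt_sub (x := x)) => //=; rewrite ltnn.
Qed.

Lemma is_perm_std s : uniq s -> is_perm (std s).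
Proof.
move=> us; rewrite /is_perm size_map.
have ust : uniq (std s).
  rewrite map_inj_in_uniq // => x y xs ys e; apply/eqP; case: ltngtP => // h.
    by move: h; rewrite -(rank_lt _ xs) /rank e ltnn.
  by move: h; rewrite -(rank_lt _ ys) /rank e ltnn.
have sub : {subset std s <= iota 0 (size s)}.
  by move=> z /mapP[x xs ->]; rewrite mem_iota rank_lt_size.
apply: uniq_perm => //; first exact: iota_uniq.
have le_size : size (iota 0 (size s)) <= size (std s) by rewrite size_iota size_map.
by have [_ h] := uniq_min_size ust sub le_size; move=> z; rewrite h.
Qed.

Lemma count_lt_iota n x : x <= n -> count (fun y => y < x) (iota 0 n) = x.
Proof.
move=> hx; rewrite -(subnKC hx) iotaD count_cat add0n.
rewrite (eq_in_count (a2 := predT)) => [|y]; last by rewrite mem_iota.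
rewrite count_predT size_iota (eq_in_count (a2 := pred0)) ?count_pred0 ?addn0 //.
by move=> y; rewrite mem_iota /= => /andP[h _]; rewrite ltnNge h.
Qed.

Lemma is_perm_mem s x : is_perm s -> (x \in s) = (x < size s).
Proof. by move=> ps; rewrite (perm_mem ps) mem_iota. Qed.

Lemma is_perm_uniq s : is_perm s -> uniq s.
Proof. by move=> ps; rewrite (perm_uniq ps) iota_uniq. Qed.

Lemma std_id s : is_perm s -> std s = s.
Proof.
move=> ps; rewrite /std -[in RHS](map_id s); apply/eq_in_map => x xs.
by rewrite (permP ps) count_lt_iota // ltnW -?is_perm_mem.
Qed.

Definition order_agree (A B : eqType) (rA : rel A) (rB : rel B) (z : seq (A * B)) :=
  {in z &, forall x y, rA x.1 y.1 = rB x.2 y.2}.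

Lemma mem_zip_nth (A B : eqType) (a0 : A) (b0 : B) s t x :
  size s = size t -> x \in zip s t -> exists2 i, i < size s & x = (nth a0 s i, nth b0 t i).
Proof.
move=> st /(nthP (a0, b0)) [i]; rewrite size_zip st minnn => hi <-.
by exists i; rewrite ?st // nth_zip.
Qed.

Lemma nth_mem_zip (A B : eqType) (a0 : A) (b0 : B) s t i :
  size s = size t -> i < size s -> (nth a0 s i, nth b0 t i) \in zip s t.
Proof. by move=> st hi; rewrite -nth_zip // mem_nth // size_zip st minnn -st. Qed.

Lemma std_order_agree s t :
  size s = size t -> order_agree ltn ltn (zip s t) -> std s = std t.
Proof.
move=> st ag; apply: (@eq_from_nth _ 0); first by rewrite !size_map.
move=> i; rewrite size_map => hi; rewrite !std_nth -?st //.
have count_nth (P : pred nat) u : count P u = count (P \o nth 0 u) (iota 0 (size u)).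
  by rewrite -{1}(mkseq_nth 0 u) /mkseq count_map.
rewrite /rank (count_nth _ s) (count_nth _ t) -st.
apply: eq_in_count => j; rewrite mem_iota /= => hj.
exact: ag (nth_mem_zip 0 0 st hj) (nth_mem_zip 0 0 st hi).
Qed.

Lemma order_agree_trans (A B C : eqType) (a0 : A) (b0 : B) (c0 : C)
    (rA : rel A) (rB : rel B) (rC : rel C) s t r :
  size s = size t -> size t = size r ->
  order_agree rA rB (zip s t) -> order_agree rC rB (zip r t) -> order_agree rA rC (zip s r).
Proof.
move=> st tr h1 h2 x y /(mem_zip_nth a0 c0 (etrans st tr)) [i hi ->].
move=> /(mem_zip_nth a0 c0 (etrans st tr)) [j hj ->] /=.
rewrite (h1 _ _ (nth_mem_zip a0 b0 st hi) (nth_mem_zip a0 b0 st hj)).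
rewrite st tr in hi hj.
by rewrite (h2 _ _ (nth_mem_zip c0 b0 (esym tr) hi) (nth_mem_zip c0 b0 (esym tr) hj)).
Qed.

Lemma order_agree_map (A B C : eqType) (rA : rel A) (rB : rel B) (rC : rel C)
    (G : C -> B) (s : seq A) (t : seq C) :
  size s = size t -> {in t &, forall y y', rB (G y) (G y') = rC y y'} ->
  order_agree rA rB (zip s (map G t)) -> order_agree rA rC (zip s t).
Proof.
move=> st hG h x y hx; have [a0 c0] := x; move: hx.
move=> /(mem_zip_nth a0 c0 st) [i hi ->] /(mem_zip_nth a0 c0 st) [j hj ->].
have st' : size s = size (map G t) by rewrite size_map.
have := h _ _ (nth_mem_zip a0 (G c0) st' hi) (nth_mem_zip a0 (G c0) st' hj).
by rewrite !(nth_map c0) -?st // => ->; apply: hG; apply: mem_nth; rewrite -st.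
Qed.

Lemma mask_zip (A B : Type) m (s : seq A) (t : seq B) :
  size s = size t -> mask m (zip s t) = zip (mask m s) (mask m t).
Proof. by elim: s t m => [|x s IH] [|y t] [|[] m] //= [/IH ->]. Qed.

Lemma strictly_below_size p r : is_perm r -> strictly_below p r -> size p < size r.
Proof.
move=> pr [[A <-] ne]; rewrite size_map ltn_neqAle size_subseq ?mask_subseq // andbT.
apply/negP => e; apply: ne.
have /eqP em : mask A r == r by rewrite -(size_subseq_leqif (mask_subseq A r)).2.
by rewrite /restrict em std_id.
Qed.

(** * Permutations encoded by words of blocks *)

(* An entry (b, q, plus) of block P: the band b of the value, its rank q inside the block, and
   whether the piece of the block is ⊕-decomposed. *)
Definition entry := (nat * nat * bool)%type.

Definition entry_lt (e e' : nat * entry) : bool :=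
  let: (P, (b, q, plus)) := e in
  let: (P', (b', q', _)) := e' in
  if b != b' then b < b'
  else if P == P' then q < q'
  else if plus then P < P' else P' < P.

Definition tag_blocks (ps : seq nat) (w : seq (seq entry)) : seq (nat * entry) :=
  flatten [seq map (pair pl.1) pl.2 | pl <- zip ps w].

Definition entries (w : seq (seq entry)) := tag_blocks (iota 0 (size w)) w.

Definition encodes (w : seq (seq entry)) (pi : seq nat) :=
  [/\ is_perm pi, size pi = size (entries w) & order_agree ltn entry_lt (zip pi (entries w))].

Definition block_mask (m : bitseq) (w : seq (seq entry)) : bitseq :=
  flatten [seq nseq (size bl.2) bl.1 | bl <- zip m w].

Lemma tag_blocks_cons P ps L w :
  tag_blocks (P :: ps) (L :: w) = map (pair P) L ++ tag_blocks ps w.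
Proof. by []. Qed.

Lemma block_mask_cons b m L w : block_mask (b :: m) (L :: w) = nseq (size L) b ++ block_mask m w.
Proof. by []. Qed.

Lemma size_tag_blocks ps w : size ps = size w -> size (tag_blocks ps w) = sumn (map size w).
Proof.
by elim: w ps => [|L w IH] [|P ps] //= [/IH]; rewrite tag_blocks_cons size_cat size_map => ->.
Qed.

Lemma size_block_mask m w : size m = size w -> size (block_mask m w) = sumn (map size w).
Proof.
by elim: w m => [|L w IH] [|b m] //= [/IH]; rewrite block_mask_cons size_cat size_nseq => ->.
Qed.

Lemma mask_tag_blocks m ps w : size m = size w -> size ps = size w ->
  mask (block_mask m w) (tag_blocks ps w) = tag_blocks (mask m ps) (mask m w).
Proof.
elim: w m ps => [|L w IH] [|b m] [|P ps] //= [sm] [sps].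
rewrite block_mask_cons tag_blocks_cons mask_cat ?size_nseq ?size_map // IH //.
by case: b; rewrite ?mask_true ?mask_false ?size_map.
Qed.

Lemma tag_blocks_map (G : nat -> nat) ps w : size ps = size w ->
  tag_blocks (map G ps) w = [seq (G e.1, e.2) | e <- tag_blocks ps w].
Proof.
elim: w ps => [|L w IH] [|P ps] //= [/IH e].
by rewrite !tag_blocks_cons e map_cat -!map_comp.
Qed.

Lemma mem_tag_blocks ps w e : e \in tag_blocks ps w -> e.1 \in ps.
Proof.
elim: w ps => [|L w IH] [|P ps] //=; rewrite tag_blocks_cons mem_cat inE.
by case/orP => [/mapP[x _ ->]|/IH ->]; rewrite ?eqxx ?orbT.
Qed.

Lemma entry_lt_relabel (G : nat -> nat) (D : {pred nat}) e e' :
  {in D &, {mono G : a b / a <= b}} -> e.1 \in D -> e'.1 \in D ->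
  entry_lt (G e.1, e.2) (G e'.1, e'.2) = entry_lt e e'.
Proof.
case: e e' => P [[b q] s] [P' [[b' q'] s']] /= hG hP hP'.
by rewrite (inj_in_eq (incn_inj_in hG)) // !(leqW_mono_in hG).
Qed.

Lemma mask_entries m w : size m = size w ->
  mask (block_mask m w) (entries w) =
  [seq (nth 0 (mask m (iota 0 (size w))) e.1, e.2) | e <- entries (mask m w)].
Proof.
move=> sm; set ps := mask m _.
have sps : size ps = size (mask m w) by rewrite !size_mask ?size_iota.
rewrite /entries mask_tag_blocks ?size_iota // -tag_blocks_map ?size_iota //.
by rewrite -sps -/(mkseq _ _) mkseq_nth.
Qed.

Lemma encodes_subseq_contains u w pi rho :
  encodes u pi -> encodes w rho -> subseq u w -> contains pi rho.
Proof.
move=> [ppi spi api] [prho srho arho] /subseqP[m sm eu]; subst u.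
set A := block_mask m w; set ps := mask m (iota 0 (size w)).
set G := fun e : nat * entry => (nth 0 ps e.1, e.2).
have sA : size A = size rho.
  by rewrite srho size_block_mask // /entries size_tag_blocks ?size_iota.
have sX : size (mask A rho) = size (entries (mask m w)).
  by rewrite -(size_map G) -mask_entries // !size_mask // -srho.
have ps_mono : {in gtn (size (mask m w)) &, {mono nth 0 ps : a b / a <= b}}.
  have sorted_ps : sorted ltn ps by apply: sorted_mask; [exact: ltn_trans|exact: iota_ltn_sorted].
  have sps : size ps = size (mask m w) by rewrite !size_mask ?size_iota.
  apply: leq_mono_in => a b ha hb.
  by apply: (sorted_ltn_nth ltn_trans) => //; rewrite inE sps.
(* Selecting blocks only renumbers them increasingly, which does not affect [entry_lt]. *)
have ag : order_agree ltn entry_lt (zip (mask A rho) (entries (mask m w))).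
  apply: (order_agree_map (G := G)) => // [y y' hy hy'|].
    apply: (entry_lt_relabel ps_mono).
      by have := mem_tag_blocks hy; rewrite mem_iota.
    by have := mem_tag_blocks hy'; rewrite mem_iota.
  rewrite -mask_entries // -mask_zip //; apply: sub_in2 arho => x; exact: mem_mask.
exists A; rewrite /restrict -(std_id ppi).
apply: std_order_agree; first by rewrite sX spi.
exact: (order_agree_trans 0 (0, (0, 0, true)) 0 sX (esym spi) ag api).
Qed.

(** * Higman's lemma *)

Lemma ex_minimal_nat (P : nat -> Prop) :
  (exists n, P n) -> exists n, P n /\ forall m, P m -> n <= m.
Proof.
move=> [n Pn]; apply: NNPP => nomin; elim/ltn_ind: n Pn => n IH Pn.
by apply: nomin; exists n; split => // m Pm; rewrite leqNgt; apply/negP => /IH; apply.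
Qed.

Lemma recurrent_value (T : eqType) (s : seq T) (x : nat -> T) :
  (forall n, x n \in s) -> exists a, forall N, exists2 n, N <= n & x n = a.
Proof.
elim: s x => [|b s IH] x xs; first by have := xs 0.
have [rec|/not_all_ex_not [N hN]] := classic (forall N, exists2 n, N <= n & x n = b).
  by exists b.
have [n|a ha] := IH (fun n => x (N + n)).
  have := xs (N + n); rewrite inE => /predU1P[e|//].
  by case: hN; exists (N + n); rewrite ?leq_addr.
exists a => M; have [n hn e] := ha M.
by exists (N + n) => //; apply: leq_trans hn (leq_addl _ _).
Qed.

Lemma recurrent_subsequence (P : nat -> Prop) : (forall N, exists2 n, N <= n & P n) ->
  exists phi : nat -> nat, {homo phi : m n / m < n} /\ forall m, P (phi m).
Proof.
move=> hP; have {}hP N : exists n, N <= n /\ P n by have [n] := hP N; exists n.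
pose next N := proj1_sig (constructive_indefinite_description _ (hP N)).
have next_spec N : N <= next N /\ P (next N).
  by rewrite /next; case: constructive_indefinite_description.
pose phi m := iter m (fun n => next n.+1) (next 0).
exists phi; split => [|m]; last by case: m => [|m]; exact: (next_spec _).2.
apply: (@homo_ltn _ phi (fun x y => x < y)) => [y x z|m]; first exact: ltn_trans.
by have [] := next_spec (phi m).+1.
Qed.

Section Higman.
Variables (T : eqType) (alph : seq T).

Definition over_alph (w : seq T) := all (mem alph) w.

Definition bad (f : nat -> seq T) :=
  (forall n, over_alph (f n)) /\ (forall i j, i < j -> ~~ subseq (f i) (f j)).

Definition bad_prefix (s : seq (seq T)) :=
  exists2 f, bad f & forall i, i < size s -> f i = nth [::] s i.

Definition shortest_extension (s : seq (seq T)) (w : seq T) :=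
  bad_prefix (rcons s w) /\ forall w', bad_prefix (rcons s w') -> size w <= size w'.

Definition extend (s : seq (seq T)) : seq T :=
  epsilon (inhabits [::]) (shortest_extension s).

Lemma bad_prefix_rcons s f :
  bad f -> (forall i, i < size s -> f i = nth [::] s i) -> bad_prefix (rcons s (f (size s))).
Proof.
move=> bf hf; exists f => // i; rewrite size_rcons ltnS leq_eqVlt nth_rcons.
by case/predU1P => [->|hi]; rewrite ?ltnn ?eqxx // hi hf.
Qed.

Lemma extendP s : bad_prefix s -> shortest_extension s (extend s).
Proof.
move=> [f bf hf]; apply: epsilon_spec.
have [_ [[w [<- ext_w]] min_w]] := ex_minimal_nat
  (ex_intro (fun n => exists w, size w = n /\ bad_prefix (rcons s w)) _
    (ex_intro _ _ (conj erefl (bad_prefix_rcons bf hf)))).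
by exists w; split => // w' ext_w'; apply: min_w; exists w'.
Qed.

Fixpoint minimal_prefix (n : nat) : seq (seq T) :=
  if n is n'.+1 then rcons (minimal_prefix n') (extend (minimal_prefix n')) else [::].

Definition minimal_bad n := extend (minimal_prefix n).

Lemma size_minimal_prefix n : size (minimal_prefix n) = n.
Proof. by elim: n => //= n IH; rewrite size_rcons IH. Qed.

Lemma nth_minimal_prefix n i : i < n -> nth [::] (minimal_prefix n) i = minimal_bad i.
Proof.
elim: n => // n IH; rewrite ltnS leq_eqVlt /= nth_rcons size_minimal_prefix.
by case/predU1P => [->|hi]; rewrite ?ltnn ?eqxx // hi IH.
Qed.

Hypothesis ex_bad : exists f, bad f.

Lemma bad_minimal_prefix n : bad_prefix (minimal_prefix n).
Proof.
elim: n => [|n IH] /=; last by case: (extendP IH).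
by have [f bf] := ex_bad; exists f.
Qed.

Lemma bad_minimal_bad : bad minimal_bad.
Proof.
have agree n : exists2 f, bad f & forall i, i <= n -> f i = minimal_bad i.
  have [f bf hf] := bad_minimal_prefix n.+1.
  by exists f => // i hi; rewrite hf ?size_minimal_prefix // nth_minimal_prefix.
split=> [n|i j hij].
  by have [f [okf _] <-] := agree n; rewrite ?leqnn.
have [f [_ bf] hf] := agree j.
by rewrite -!hf ?(ltnW hij) //; apply: bf.
Qed.

Lemma minimal_bad_min n h : bad h -> (forall i, i < n -> h i = minimal_bad i) ->
  size (minimal_bad n) <= size (h n).
Proof.
move=> bh hh; have [_] := extendP (bad_minimal_prefix n); apply.
have := @bad_prefix_rcons (minimal_prefix n) h bh; rewrite size_minimal_prefix; apply.
by move=> i hi; rewrite nth_minimal_prefix // hh.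
Qed.

Lemma bad_recurrent_head f : bad f -> exists a (phi : nat -> nat),
  {homo phi : m n / m < n} /\ forall m, exists s, f (phi m) = a :: s.
Proof.
move=> [okf bad_f].
have nonnil n : f n != [::].
  by apply/eqP => e; have := bad_f n n.+1 (ltnSn n); rewrite e sub0seq.
have [x0 _] : exists x0 : T, True by case: (f 0) (nonnil 0) => // x0; exists x0.
have head_in n : head x0 (f n) \in alph.
  by have := okf n; case: (f n) (nonnil n) => //= x s _ /andP[].
have [a /recurrent_subsequence [phi [phi_mono phi_a]]] := recurrent_value head_in.
exists a, phi; split => // m; have := phi_a m.
by case: (f (phi m)) (nonnil (phi m)) => //= x s _ ->; exists s.
Qed.

End Higman.

Theorem higman (T : eqType) (alph : seq T) (f : nat -> seq T) :
  (forall n, over_alph alph (f n)) -> exists i j, i < j /\ subseq (f i) (f j).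
Proof.
move=> okf; apply: NNPP => no_good.
have ex_bad : exists f, bad alph f.
  by exists f; split => // i j hij; apply/negP => hs; apply: no_good; exists i, j.
have bad_g := bad_minimal_bad ex_bad; set g := minimal_bad alph in bad_g *.
have [a [phi [phi_mono phi_a]]] := bad_recurrent_head bad_g; case: bad_g => okg bad_g.
set n0 := phi 0.
pose h i := if i < n0 then g i else behead (g (phi (i - n0))).
pose psi i := if i < n0 then i else phi (i - n0).
have psi_mono : {homo psi : i j / i < j}.
  move=> i j hij; rewrite /psi; case: (ltnP j n0) => hj; first by rewrite (ltn_trans hij hj).
  case: (ltnP i n0) => hi; first exact: leq_trans hi (ltnW_homo phi_mono (leq0n _)).
  by apply: phi_mono; move: hi hij; clear; lia.
have h_cons i : n0 <= i -> g (psi i) = a :: h i.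
  by rewrite /h /psi leqNgt => /negbTE ->; have [s ->] := phi_a (i - n0).
have h_sub i : subseq (h i) (g (psi i)).
  case: (ltnP i n0) => hi; last by rewrite h_cons // subseq_cons.
  by rewrite /h /psi hi subseq_refl.
(* h replaces g (phi m), which all start with a, by their tails: were h bad, it would beat the
   minimality of g at n0. *)
have [i [j [hij hs]]] : exists i j, i < j /\ subseq (h i) (h j).
  apply: NNPP => no_good_h.
  have bad_h : bad alph h.
    split=> [n|i j hij]; last by apply/negP => hs; apply: no_good_h; exists i, j.
    by apply/allP => x /(mem_subseq (h_sub n)); apply/allP/okg.
  have agree_g i : i < n0 -> h i = g i by rewrite /h => ->.
  have : size (g n0) <= size (h n0) := minimal_bad_min ex_bad bad_h agree_g.
  have := h_cons n0 (leqnn n0); rewrite {1}/psi ltnn subnn => ->.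
  by rewrite /= ltnn.
apply: (negP (bad_g _ _ (psi_mono _ _ hij))); case: (ltnP i n0) => hi.
  by apply: subseq_trans (h_sub j); rewrite /psi /h hi in hs *.
by rewrite (h_cons i hi) (h_cons j (leq_trans hi (ltnW hij))) /= eqxx.
Qed.

(** * Greedy partitions and cuts *)

Lemma longestP k r : 1 < k -> 0 < size r ->
  0 < longest k r <= size r /\ inH k (std (take (longest k r) r)).
Proof.
move=> hk hr; have one_in : 1 \in iota 0 (size r).+1 by rewrite mem_iota ltnS.
have inH1 : inH k (std (take 1 r)).
  by case: r hr {one_in} => // x r _; rewrite /inH /h_plus /std /max_block /= take0 ltnn /= hk.
rewrite /longest foldrE big_filter big_seq_cond; set L := \big[maxn/0]_(i <- _ | _) i.
have /andP[-> ->] : (L <= size r) && inH k (std (take L r)).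
  apply: (big_ind (fun L => (L <= size r) && inH k (std (take L r)))) => [|x y|i].
  - by rewrite take0 /inH /h_plus /max_block /= ltnW.
  - by rewrite /maxn; case: ifP.
  - by rewrite mem_iota ltnS.
by rewrite andbT; split => //; apply: leq_trans (leq_bigmax_seq 1 one_in _); rewrite ?one_in.
Qed.

Lemma greedyP k f r : 1 < k -> size r <= f -> exists Q : seq (seq nat),
  [/\ flatten Q = r, size Q = greedy f k r & all (fun q => inH k (std q)) Q].
Proof.
move=> hk; elim: f r => [|f IH] [|x r] //= hr; try by exists [::].
set L := longest k (x :: r).
have [/andP[L_gt0 L_le] L_inH] := longestP hk (isT : 0 < size (x :: r)).
have [|Q [eQ sQ HQ]] := IH (drop L (x :: r)).
  by rewrite size_drop; move: hr L_gt0 => /=; lia.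
by exists (take L (x :: r) :: Q); rewrite /= eQ cat_take_drop sQ L_inH.
Qed.

Lemma perm_cut_sep s x (P : pred nat) : is_perm s -> x <= size s ->
  count P (iota 0 (size s)) = x -> all P (take x s) -> all (predC P) (drop x s).
Proof.
move=> ps hx cP aP; have := congr1 (count P) (cat_take_drop x s).
rewrite count_cat (permP ps) cP (eqP (etrans (esym (all_count _ _)) aP)) size_takel //.
by rewrite -[RHS]addn0 => /addnI /eqP; rewrite all_predC has_count lt0n negbK.
Qed.

Lemma plus_cut_lt s x i j : is_perm s -> all (fun v => v < x) (take x s) ->
  i < x <= j -> j < size s -> nth 0 s i < nth 0 s j.
Proof.
move=> ps cut /andP[hi hj] hjs; have hxs : x <= size s := leq_trans hj (ltnW hjs).
have in_take : nth 0 s i \in take x s by rewrite -(nth_take _ hi) mem_nth // size_takel.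
have in_drop : nth 0 s j \in drop x s.
  by rewrite -(subnKC hj) -nth_drop mem_nth // size_drop ltn_sub2r // (leq_ltn_trans hj).
have := allP (perm_cut_sep ps hxs (count_lt_iota hxs) cut) _ in_drop.
by rewrite /= -leqNgt; apply: leq_trans; apply: (allP cut).
Qed.

Lemma count_geq_iota n x : x <= n -> count (fun v => n - x <= v) (iota 0 n) = x.
Proof.
move=> hx; have := count_predC (fun v => v < n - x) (iota 0 n).
rewrite count_lt_iota ?leq_subr // size_iota (eq_count (a2 := fun v => n - x <= v)).
  by move: hx; lia.
by move=> v; rewrite /= -leqNgt.
Qed.

Lemma minus_cut_lt s x i j : is_perm s -> all (fun v => size s - x <= v) (take x s) ->
  i < x <= j -> j < size s -> nth 0 s j < nth 0 s i.
Proof.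
move=> ps cut /andP[hi hj] hjs; have hxs : x <= size s := leq_trans hj (ltnW hjs).
have in_take : nth 0 s i \in take x s by rewrite -(nth_take _ hi) mem_nth // size_takel.
have in_drop : nth 0 s j \in drop x s.
  by rewrite -(subnKC hj) -nth_drop mem_nth // size_drop ltn_sub2r // (leq_ltn_trans hj).
have := allP (perm_cut_sep ps hxs (count_geq_iota hxs) cut) _ in_drop.
by rewrite /= -ltnNge => /leq_trans; apply; apply: (allP cut).
Qed.

Lemma max_pairmap_gap a cs x y : sorted ltn (a :: cs) -> a <= x <= y -> y < last a cs ->
  (forall c, c \in cs -> x < c -> y < c) ->
  y - x < foldr maxn 0 (pairmap (fun a b => b - a) a cs).
Proof.
elim: cs a => [|c cs IH] a /=; first by move=> _ /andP[hax hxy] hya; move: hax hxy hya; lia.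
move=> /andP[hac hs] /andP[hax hxy] hyl hc.
case: (leqP c x) => hcx.
  apply: leq_trans (leq_maxr _ _) ; apply: IH; rewrite ?hcx //.
  by move=> c' hc'; apply: hc; rewrite inE hc' orbT.
have hyc : y < c by apply: hc; rewrite ?inE ?eqxx.
by apply: leq_trans (leq_maxl _ _); move: hyc hax hcx; lia.
Qed.

Lemma max_block_gap (C : pred nat) l x y : C l -> x <= y < l ->
  (forall c, x < c <= y -> ~~ C c) -> y - x < max_block (filter C (iota 1 l)).
Proof.
move=> Cl /andP[hxy hyl] hno; have l_gt0 : 0 < l by apply: leq_ltn_trans hyl.
apply: max_pairmap_gap; rewrite ?hxy //.
- have : sorted ltn (filter (fun z => (z == 0) || C z) (0 :: iota 1 l)).
    by apply: sorted_filter; [exact: ltn_trans | exact: (iota_ltn_sorted 0 l.+1)].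
  rewrite /= (@eq_in_filter _ _ C) // => z; rewrite mem_iota => /andP[hz _].
  by rewrite /= (gtn_eqF hz).
- have -> : iota 1 l = rcons (iota 1 l.-1) l.
    by have := iotaD 1 l.-1 1; rewrite addn1 prednK // => ->; rewrite cats1 add1n prednK.
  by rewrite filter_rcons Cl last_rcons.
- move=> c; rewrite mem_filter => /andP[hC _] hxc; rewrite ltnNge; apply: contraTN hC => hcy.
  by apply: hno; rewrite hxc.
Qed.

Definition nmarks (a : pred nat) (i : nat) : nat := count a (iota 1 i).

Section Marks.
Variable a : pred nat.

Lemma nmarks_split i j : i <= j -> nmarks a j = nmarks a i + count a (iota i.+1 (j - i)).
Proof. by move=> h; rewrite /nmarks -{1}(subnKC h) iotaD count_cat add1n. Qed.

Lemma nmarks_mono : {homo nmarks a : i j / i <= j}.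
Proof. by move=> i j h; rewrite (nmarks_split h) leq_addr. Qed.

Lemma nmarks_le i : nmarks a i <= i.
Proof. by rewrite /nmarks -[leqRHS](size_iota 1 i) count_size. Qed.

Lemma mem_iota_between i j m : i <= j -> (m \in iota i.+1 (j - i)) = (i < m <= j).
Proof. by move=> h; rewrite mem_iota addSn subnKC // ltnS. Qed.

Lemma nmarks_eq i j m : i <= j -> nmarks a i = nmarks a j -> i < m <= j -> ~~ a m.
Proof.
move=> h /eqP; rewrite (nmarks_split h) -{1}[nmarks a i]addn0 eqn_add2l eq_sym -leqn0 leqNgt.
by rewrite -has_count => /hasPn hm hij; apply: hm; rewrite mem_iota_between.
Qed.

Lemma nmarks_lt i j : i <= j -> nmarks a i < nmarks a j -> exists2 m, i < m <= j & a m.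
Proof.
move=> h; rewrite (nmarks_split h) -{1}[nmarks a i]addn0 ltn_add2l -has_count.
by case/hasP => m; rewrite mem_iota_between // => hm am; exists m.
Qed.

Lemma nmarks_ltW i j : nmarks a i < nmarks a j -> i < j.
Proof. by apply: contraTT; rewrite -!leqNgt; apply: nmarks_mono. Qed.

Lemma nmarks_eq_const (F : nat -> nat) i j : i <= j -> nmarks a i = nmarks a j ->
  (forall m, 0 < m -> ~~ a m -> F m = F m.-1) -> F j = F i.
Proof.
move=> h e hF; elim: j h e => [|j IH]; first by rewrite leqn0 => /eqP ->.
rewrite leq_eqVlt => /predU1P[-> //|hij] e.
have e' : nmarks a i = nmarks a j.
  by apply/eqP; rewrite eqn_leq nmarks_mono // e nmarks_mono.
by rewrite hF ?(nmarks_eq (ltnW hij) e) ?hij //= IH.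
Qed.

End Marks.

Lemma count_le_classes (T : eqType) (a : pred nat) (f : nat -> T) (cs : seq T) s B :
  {in s, forall j, a j -> f j \in cs} ->
  (forall c, count (fun j => a j && (f j == c)) s <= B) -> count a s <= size cs * B.
Proof.
elim: cs a => [|c cs IH] a hcs hB.
  rewrite mul0n leqn0 eqn0Ngt -has_count; apply/hasP => -[j js aj].
  by have := hcs j js aj.
rewrite -size_filter -(count_predC (fun j => f j == c)) !count_filter mulSn leq_add //.
  by apply: leq_trans (hB c); apply: sub_count => j /andP[-> ->].
apply: IH => [j js /andP[fj aj]|c']; first by have := hcs j js aj; rewrite inE (negbTE fj).
by apply: leq_trans (hB c'); apply: sub_count => j /andP[/andP[_ ->] ->].
Qed.

Definition pairs (J : seq nat) : seq nat := flatten [seq [:: j.-1; j] | j <- J].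

Lemma pairs_cons j J : pairs (j :: J) = [:: j.-1, j & pairs J].
Proof. by []. Qed.

Lemma size_pairs J : size (pairs J) = (size J).*2.
Proof. by elim: J => // j J IH; rewrite pairs_cons /= IH doubleS. Qed.

Lemma nth_pairs J i : i < (size J).*2 ->
  nth 0 (pairs J) i = if odd i then nth 0 J i./2 else (nth 0 J i./2).-1.
Proof. by elim: J i => [|j J IH] [|[|i]] // hi; rewrite pairs_cons //= IH ?negbK. Qed.

Lemma sorted_pairs J : sorted ltn J -> all (leq 1) J ->
  {in J &, forall j j', j' != j.+1} -> sorted ltn (pairs J).
Proof.
elim: J => [|j J IH] // hs /andP[hj hall] hgap; rewrite pairs_cons /= ltn_predL hj /=.
have IH' : sorted ltn (pairs J).
  by apply: IH => [|//|a b ha hb]; [exact: path_sorted hs | apply: hgap; rewrite inE ?ha ?hb orbT].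
case: J hs hall hgap IH' {IH} => [|j' J] // /andP[hjj' _] _ hgap.
rewrite pairs_cons /= => ->; rewrite andbT.
have : j' != j.+1 by apply: hgap; rewrite !inE eqxx ?orbT.
by move: hjj'; lia.
Qed.

Lemma all_pairs J (P : pred nat) : {in J, forall j, P j.-1 && P j} -> all P (pairs J).
Proof.
elim: J => [|j J IH] // h; rewrite pairs_cons /= andbA h ?mem_head //= IH // => j' hj'.
by apply: h; rewrite inE hj' orbT.
Qed.

Lemma filter_mem_iota (V : seq nat) n :
  sorted ltn V -> all (gtn n) V -> [seq v <- iota 0 n | v \in V] = V.
Proof.
move=> sV allV; apply: (irr_sorted_eq ltn_trans ltnn) => //.
  by apply: sorted_filter; [exact: ltn_trans | exact: iota_ltn_sorted].
move=> v; rewrite mem_filter mem_iota /=; case vV: (v \in V) => //=.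
exact: (allP allV).
Qed.

Lemma flatten_filter_key (p : nat -> nat) N m s :
  sorted (relpre p leq) s -> all (fun i => m <= p i < m + N) s ->
  flatten [seq [seq i <- s | p i == P] | P <- iota m N] = s.
Proof.
elim: N m s => [|N IHN] m s hs ha.
  by case: s ha hs => //= i s /andP[]; rewrite addn0; lia.
elim: s hs ha => [|i s IHs] hs ha; first by elim: (iota m N.+1).
have hmin : all (fun j => p i <= p j) s.
  by apply: order_path_min hs => b c d; apply: leq_trans.
move: ha => /= /andP[/andP[hmi hiN] ha].
case: (ltngtP (p i) m) => him; first by move: hmi; rewrite leqNgt him.
  have -> : [seq j <- s | p j == m] = [::].
    apply/eqP; rewrite -size_eq0 size_filter -leqn0 leqNgt -has_count.
    by apply/hasP => -[j /(allP hmin) hj /eqP e]; move: hj; rewrite e leqNgt him.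
  apply: (IHN m.+1 (i :: s) hs); rewrite /= him addSnnS hiN /=.
  by apply/allP => j hj; have /andP[_ ->] := allP ha j hj; rewrite (leq_trans him) ?(allP hmin).
rewrite /= him /=; congr (_ :: _); rewrite -[RHS](IHs (path_sorted hs) ha) /=.
congr (_ ++ flatten _); apply/eq_in_map => P; rewrite mem_iota => /andP[hP _].
by rewrite (ltn_eqF hP).
Qed.

Fixpoint seqs_upto (T : Type) (d : nat) (base : seq T) : seq (seq T) :=
  if d is d'.+1 then [::] :: [seq x :: s | x <- base, s <- seqs_upto d' base] else [:: [::]].

Lemma mem_seqs_upto (T : eqType) d (base : seq T) L :
  size L <= d -> all (mem base) L -> L \in seqs_upto d base.
Proof.
elim: d L => [|d IH] [|x L] //= hs /andP[hx hL]; rewrite inE; apply/orP; right.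
by apply: (@allpairs_f _ _ _ (fun x s => x :: s)) => //; apply: IH.
Qed.

Definition entry_alphabet (k B : nat) : seq entry :=
  [seq (bq, s) | bq <- [seq (b, q) | b <- iota 0 B, q <- iota 0 k], s <- [:: true; false]].

Definition letters (k B : nat) : seq (seq entry) := seqs_upto k.-1 (entry_alphabet k B).

Lemma mem_letters k B (L : seq entry) : size L < k ->
  {in L, forall e : entry, e.1.1 < B /\ e.1.2 < k} -> L \in letters k B.
Proof.
move=> hs hL; apply: mem_seqs_upto; first by rewrite -ltnS (ltn_predK hs).
apply/allP => -[[b q] s] /hL /= [hb hq].
apply: (@allpairs_f _ _ _ (fun (bq : nat * nat) (s : bool) => (bq, s))).
  by apply: (@allpairs_f _ _ _ (fun b q : nat => (b, q))); rewrite mem_iota.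
by case: s; rewrite !inE.
Qed.

(** * Encoding a permutation of the class *)

Section Encoding.
Variables (k K : nat) (pi : seq nat) (Q : seq (seq nat)).
Hypotheses (k_gt1 : 1 < k) (pi_perm : is_perm pi) (al_pi : al_lt pi K)
  (flatten_Q : flatten Q = pi) (size_Q : size Q < K)
  (Q_inH : all (fun q => inH k (std q)) Q).

Definition piece_of i := reshape_index (shape Q) i.
Definition offset i := reshape_offset (shape Q) i.
Definition piece c := nth [::] Q c.
Definition pattern c := std (piece c).
Definition plus_piece c := h_plus (pattern c) < k.

(* The cuts of the ⊕- (resp. ⊖-) decomposition of a pattern are its [plus_cuts]
   (resp. [minus_cuts]). *)
Definition is_cut c x :=
  if plus_piece c then all (fun v => v < x) (take x (pattern c))
  else all (fun v => size (pattern c) - x <= v) (take x (pattern c)).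

Definition block_start j := (piece_of j != piece_of j.-1) || is_cut (piece_of j) (offset j).
Definition block i := nmarks block_start i.

Definition label v := piece_of (index v pi).
Definition label_change j := label j.-1 != label j.
Definition band v := nmarks label_change v.

Definition block_rank i :=
  count (fun j => (block j == block i) && (nth 0 pi j < nth 0 pi i)) (iota 0 (size pi)).

Definition encoding_entry i : entry :=
  (band (nth 0 pi i), block_rank i, plus_piece (piece_of i)).

Definition encoding : seq (seq entry) :=
  [seq [seq encoding_entry i | i <- iota 0 (size pi) & block i == P] | P <- iota 0 (size pi)].

Lemma sumn_shape : sumn (shape Q) = size pi.
Proof. by rewrite -size_flatten flatten_Q. Qed.

Lemma piece_of_lt i : i < size pi -> piece_of i < size Q.
Proof. by rewrite -sumn_shape -[size Q](size_map size); apply: reshape_indexP. Qed.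

Lemma offset_lt i : i < size pi -> offset i < size (piece (piece_of i)).
Proof. by rewrite -sumn_shape /piece -nth_shape; apply: reshape_offsetP. Qed.

Lemma nth_piece_of i : nth 0 pi i = nth 0 (piece (piece_of i)) (offset i).
Proof. by rewrite -flatten_Q nth_flatten. Qed.

Lemma piece_of_mono : {homo piece_of : i j / i <= j}.
Proof.
move=> i j; rewrite (reshape_leq (shape Q) i j) -!/(piece_of _).
by case/orP => [/ltnW //|/andP[/eqP -> _]].
Qed.

Lemma piece_of_ltW i j : piece_of i < piece_of j -> i < j.
Proof. by apply: contraTT; rewrite -!leqNgt; apply: piece_of_mono. Qed.

Lemma offset_same_piece i j : piece_of i = piece_of j -> offset i + j = offset j + i.
Proof.
move=> e; have := reshape_indexK (shape Q) i; have := reshape_indexK (shape Q) j.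
by rewrite /flatten_index -!/(piece_of _) -!/(offset _) e; lia.
Qed.

Lemma pattern_perm c : is_perm (pattern c).
Proof.
apply: is_perm_std; rewrite /piece -(flattenK Q) flatten_Q nth_reshape.
by apply/take_uniq/drop_uniq/is_perm_uniq.
Qed.

Lemma size_pattern c : size (pattern c) = size (piece c).
Proof. exact: size_map. Qed.

Lemma nth_pattern_lt c x y : x < size (piece c) -> y < size (piece c) ->
  (nth 0 (pattern c) x < nth 0 (pattern c) y) = (nth 0 (piece c) x < nth 0 (piece c) y).
Proof. by move=> hx hy; rewrite !std_nth // rank_lt // mem_nth. Qed.

Lemma block_piece i j : i <= j -> block i = block j -> piece_of j = piece_of i.
Proof.
move=> hij e; apply: (nmarks_eq_const hij e) => m _.
by rewrite /block_start negb_or => /andP[/negPn/eqP].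
Qed.

Lemma block_order i j : i < j -> j < size pi -> piece_of i = piece_of j -> block i < block j ->
  (nth 0 pi i < nth 0 pi j) = plus_piece (piece_of i).
Proof.
move=> hij hj eij hb; have [m /andP[him hmj] start_m] := nmarks_lt (ltnW hij) hb.
have pm : piece_of m = piece_of i.
  by have := piece_of_mono (ltnW him); have := piece_of_mono hmj; rewrite -eij; lia.
have pm1 : piece_of m.-1 = piece_of i.
  have him1 : i <= m.-1 by move: him; lia.
  by have := piece_of_mono him1; have := piece_of_mono (leq_pred m); rewrite pm; lia.
move: start_m; rewrite /block_start pm pm1 eqxx /= => cut_m.
have em := offset_same_piece pm; have ej := offset_same_piece eij.
have hj_off := offset_lt hj; rewrite -eij in hj_off.
have hi_off : offset i < offset m <= offset j by move: em ej him hmj; lia.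
have hi_sz : offset i < size (piece (piece_of i)) by move: hi_off hj_off; lia.
rewrite !nth_piece_of -eij -(nth_pattern_lt hi_sz hj_off); rewrite -size_pattern in hj_off.
move: cut_m; rewrite /is_cut; case: (plus_piece _) => cut_m.
  exact: plus_cut_lt (pattern_perm _) cut_m hi_off hj_off.
by apply/negbTE; rewrite -leqNgt ltnW // (minus_cut_lt (pattern_perm _) cut_m hi_off).
Qed.

Lemma inH_pattern c : c < size Q -> inH k (pattern c).
Proof. by move=> hc; apply: (allP Q_inH); apply: mem_nth. Qed.

Lemma block_span i j : i <= j -> j < size pi -> block i = block j -> (j - i).+1 < k.
Proof.
move=> hij hj e; have eij := block_piece hij e; set c := piece_of i in eij.
have ej := offset_same_piece (esym eij).
have hj_off : offset i <= offset j < size (pattern c).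
  by rewrite size_pattern -eij offset_lt // andbT; move: ej hij; lia.
have no_cut x : offset i < x <= offset j -> ~~ is_cut c x.
  move=> hx; set m := i + (x - offset i).
  have /andP[him hmj] : i < m <= j by move: hx ej; lia.
  have em : block m = block i by apply/eqP; rewrite eqn_leq {1}e !nmarks_mono // ltnW.
  have pm : piece_of m = c := block_piece (ltnW him) (esym em).
  have -> : x = offset m by have := offset_same_piece pm; move: hx; lia.
  have /(_ m) := nmarks_eq hij e; rewrite him hmj => /(_ isT).
  by rewrite /block_start pm negb_or => /andP[].
have hH := inH_pattern (piece_of_lt (leq_ltn_trans hij hj)).
rewrite (_ : j - i = offset j - offset i); last by move: ej; lia.
move: no_cut; rewrite /is_cut; case plus: (plus_piece c) => no_cut.
  apply: leq_ltn_trans plus; apply: max_block_gap no_cut => //.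
  by rewrite take_size; apply/allP => v; rewrite -is_perm_mem //; apply: pattern_perm.
apply: (@leq_ltn_trans (h_minus (pattern c))).
  by apply: max_block_gap no_cut => //; rewrite subnn; apply/allP.
by move: hH; rewrite /inH -/(plus_piece c) plus.
Qed.

Lemma size_block P : size [seq i <- iota 0 (size pi) | block i == P] < k.
Proof.
set s := [seq i <- _ | _].
have s_sorted : sorted ltn s by apply: sorted_filter; [exact: ltn_trans | exact: iota_ltn_sorted].
have mem_s m : m \in s -> (block m == P) && (m < size pi) by rewrite mem_filter mem_iota.
case es : s s_sorted => [|i0 s'] s_sorted; first exact: ltnW.
have /andP[/eqP b0 _] : (block i0 == P) && (i0 < size pi) by rewrite mem_s // es mem_head.
have sub : {subset s <= iota i0 k.-1}.
  move=> m ms; have /andP[/eqP bm hm] := mem_s m ms.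
  have hle : i0 <= m.
    move: ms; rewrite es inE => /predU1P[-> //|].
    by move/(allP (order_path_min ltn_trans s_sorted)); apply: ltnW.
  by have := block_span hle hm (etrans b0 (esym bm)); rewrite mem_iota hle; lia.
rewrite -es in s_sorted; have := uniq_leq_size (sorted_uniq ltn_trans ltnn s_sorted) sub.
by rewrite size_iota es => /leq_ltn_trans; apply; rewrite ltn_predL ltnW.
Qed.

Lemma block_rank_lt i : block_rank i < k.
Proof.
apply: leq_ltn_trans (size_block (block i)); rewrite size_filter.
by apply: sub_count => j /andP[].
Qed.

Lemma block_rank_mono i j : i < size pi -> block i = block j ->
  (block_rank i < block_rank j) = (nth 0 pi i < nth 0 pi j).
Proof.
move=> hi e; rewrite /block_rank e; case: (ltnP (nth 0 pi i) (nth 0 pi j)) => h.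
  apply: (count_lt_sub (x := i)); rewrite ?mem_iota ?e ?eqxx ?ltnn ?andbF //=.
  by move=> z /andP[-> hz]; apply: ltn_trans h.
by apply/negbTE; rewrite -leqNgt; apply: sub_count => z /andP[-> hz]; apply: leq_trans h.
Qed.

Lemma index_nth_pi i : i < size pi -> index (nth 0 pi i) pi = i.
Proof. by move=> hi; rewrite index_uniq // is_perm_uniq. Qed.

Lemma label_nth i : i < size pi -> label (nth 0 pi i) = piece_of i.
Proof. by move=> hi; rewrite /label index_nth_pi. Qed.

Lemma band_label v v' : v <= v' -> band v = band v' -> label v' = label v.
Proof. by move=> h e; apply: (nmarks_eq_const h e) => m _ /negPn/eqP. Qed.


Lemma encoding_order i j : i < size pi -> j < size pi ->
  (nth 0 pi i < nth 0 pi j) = entry_lt (block i, encoding_entry i) (block j, encoding_entry j).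
Proof.
move=> hi hj; rewrite /entry_lt /encoding_entry; set a := nth 0 pi i; set b := nth 0 pi j.
case: (ltngtP (band a) (band b)) => [/nmarks_ltW -> //|/nmarks_ltW hba|eab].
  by apply/negbTE; rewrite -leqNgt ltnW.
have eij : piece_of i = piece_of j.
  rewrite -(label_nth hi) -(label_nth hj) -/a -/b.
  by case: (leqP a b) => h; [rewrite (band_label h eab) | rewrite (band_label (ltnW h) (esym eab))].
case: (ltngtP (block i) (block j)) => [hb|hb|/block_rank_mono -> //].
  by rewrite (block_order (nmarks_ltW hb) hj eij hb); case: plus_piece.
have ji := nmarks_ltW hb; have := block_order ji hi (esym eij) hb; rewrite -eij -/a -/b.
have ab : a != b.
  by apply: contraTneq ji => e; rewrite -(index_nth_pi hi) -(index_nth_pi hj) -/a -/b e ltnn.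
case: plus_piece => /= hba; first by apply/negbTE; rewrite -leqNgt ltnW.
by move/negbT: hba; rewrite -leqNgt leq_eqVlt (negbTE ab).
Qed.

Lemma K_gt0 : 0 < K.
Proof. exact: leq_ltn_trans size_Q. Qed.

Lemma label_lt v : v < size pi -> label v < K.
Proof.
by move=> hv; apply: ltn_trans size_Q; apply: piece_of_lt; rewrite index_mem is_perm_mem.
Qed.


Lemma alternating_labels_short V x y : y < x -> sorted ltn V -> all (gtn (size pi)) V ->
  (forall i, i < size V -> label (nth 0 V i) = if odd i then y else x) -> size V < K.
Proof.
move=> yx sV allV labV; set M := [seq index v pi | v <- V].
have uM : uniq M.
  rewrite map_inj_in_uniq ?(sorted_uniq ltn_trans ltnn) // => v v' hv hv'.
  by apply: (index_inj 0); rewrite is_perm_mem //; apply: (allP allV).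
(* Pieces are intervals of positions, so labels order the positions of the values of V. *)
have sigma_alt : alternating (std M).
  move=> i j; rewrite !size_map => hi hj ei oj.
  rewrite !std_nth ?size_map // rank_lt ?mem_nth ?size_map // !(nth_map 0) //.
  by apply: piece_of_ltW; rewrite -!/(label _) !labV // oj (negbTE ei).
have sigma_in : contains (std M) (perm_inv pi).
  exists [seq v \in V | v <- iota 0 (size pi)].
  by rewrite /restrict /perm_inv -map_mask -filter_mask filter_mem_iota.
have := al_pi (is_perm_std uM) sigma_alt (or_intror sigma_in).
by rewrite !size_map.
Qed.

Lemma few_label_changes x y :
  count (fun j => label_change j && ((label j.-1, label j) == (x, y))) (iota 1 (size pi).-1) < K.
Proof.
rewrite ltnNge -size_filter; apply/negP.
set J := [seq j <- _ | _] => sJ.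
have memJ j : j \in J -> [/\ 0 < j, j < size pi, label j.-1 = x & label j = y].
  rewrite mem_filter mem_iota => /andP[/andP[_ /eqP[-> ->]] /andP[h1 h2]].
  by split => //; move: h2; case: (size pi) => //= n; lia.
have [j0 j0J] : exists j0, j0 \in J.
  by exists (nth 0 J 0); apply: mem_nth; apply: leq_trans sJ; apply: leq_ltn_trans size_Q.
have xy : x != y by move: j0J; rewrite mem_filter => /andP[/andP[+ /eqP[<- <-]] _].
(* The changes from x to y are not adjacent, so the values j - 1, j for them alternate between
   labels x and y. *)
have gap : {in J &, forall j j', j' != j.+1}.
  move=> j j' /memJ[_ _ _ lj] /memJ[_ _ lj' _]; apply: contra_neq xy => e.
  by rewrite -lj' e /= lj.
have sV : sorted ltn (pairs J).
  apply: sorted_pairs gap.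
    by apply: sorted_filter; [exact: ltn_trans | exact: iota_ltn_sorted].
  by apply/allP => j /memJ[].
have allV : all (gtn (size pi)) (pairs J).
  by apply: all_pairs => j /memJ[_ hj _ _]; rewrite /= hj (leq_ltn_trans (leq_pred j)).
have labV i : i < size (pairs J) -> label (nth 0 (pairs J) i) = if odd i then y else x.
  rewrite size_pairs => hi; rewrite nth_pairs //.
  have /memJ[_ _ lx ly] : nth 0 J i./2 \in J by rewrite mem_nth // ltn_half_double.
  by case: (odd i).
have size_V : K.*2 <= size (pairs J) by rewrite size_pairs leq_double.
case: (ltngtP x y) => [ltxy|ltyx|exy]; last by rewrite exy eqxx in xy.
  have : size (behead (pairs J)) < K.
    apply: alternating_labels_short ltxy _ _ _.
    - by case: (pairs J) sV => //= v V /path_sorted.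
    - by apply/allP => v /mem_behead /(allP allV).
    - move=> i; rewrite size_behead nth_behead => hi; rewrite labV /=; first by case: odd.
      by move: hi; case: (size _).
  by rewrite size_behead; move: size_V K_gt0; lia.
by have := alternating_labels_short ltyx sV allV labV; move: size_V K_gt0; lia.
Qed.


Lemma label_changes_bound : count label_change (iota 1 (size pi).-1) <= K * K * (K - 1).
Proof.
set cs := [seq (x, y) | x <- iota 0 K, y <- iota 0 K].
have -> : K * K = size cs by rewrite size_allpairs size_iota.
apply: (count_le_classes (f := fun j => (label j.-1, label j))) => [j|[x y]].
  rewrite mem_iota => /andP[h1 h2] _.
  by apply: allpairs_f; rewrite mem_iota label_lt //; move: h1 h2; case: (size pi) => //=; lia.
by rewrite subn1 -ltnS prednK ?K_gt0 //; apply: few_label_changes.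
Qed.

Lemma band_lt v : v < size pi -> band v < K ^ 3.
Proof.
move=> hv; have : band v <= K * K * (K - 1).
  by apply: leq_trans label_changes_bound; apply: nmarks_mono; rewrite -ltnS (ltn_predK hv).
by have := K_gt0; nia.
Qed.

Lemma entries_encoding :
  entries encoding = [seq (block i, encoding_entry i) | i <- iota 0 (size pi)].
Proof.
rewrite /entries /encoding size_map size_iota /tag_blocks -{1}(map_id (iota 0 (size pi))) zip_map.
rewrite (_ : [seq _ | _ <- _] = [seq [seq (block i, encoding_entry i) | i <- iota 0 (size pi)
    & block i == P] | P <- iota 0 (size pi)]); last first.
  rewrite -map_comp; apply/eq_in_map => P _ /=; rewrite -map_comp; apply/eq_in_map => i.
  by rewrite mem_filter => /andP[/eqP e _]; rewrite /= e.
have blocks_sorted : sorted (relpre block leq) (iota 0 (size pi)).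
  rewrite -sorted_map; apply: (homo_sorted (e := leq)); first exact: nmarks_mono.
  exact: iota_sorted.
have blocks_range : all (fun i => 0 <= block i < 0 + size pi) (iota 0 (size pi)).
  by apply/allP => i; rewrite mem_iota /= => hi; apply: leq_ltn_trans (nmarks_le _ i) hi.
by rewrite -[in RHS](flatten_filter_key blocks_sorted blocks_range) map_flatten -map_comp.
Qed.

Lemma encodes_encoding : encodes encoding pi.
Proof.
split => //; rewrite entries_encoding ?size_map ?size_iota //.
rewrite -{1}(mkseq_nth 0 pi) /mkseq zip_map => u v /mapP[i hi ->] /mapP[j hj ->] /=.
by move: hi hj; rewrite !mem_iota => /andP[_ hi] /andP[_ hj]; apply: encoding_order.
Qed.

Lemma encoding_letters : over_alph (letters k (K ^ 3)) encoding.
Proof.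
apply/allP => L /mapP[P _ ->]; apply: mem_letters; first by rewrite size_map size_block.
move=> e /mapP[i]; rewrite mem_filter mem_iota /= => /andP[_ hi] -> /=.
by rewrite band_lt ?block_rank_lt // -is_perm_mem // mem_nth.
Qed.

End Encoding.

Lemma encode k K pi : 1 < k -> is_perm pi -> al_lt pi K -> s_k k pi < K ->
  exists w, encodes w pi /\ over_alph (letters k (K ^ 3)) w.
Proof.
move=> hk pp al sk; have [Q [flat_Q size_Q Q_inH]] := greedyP hk (leqnn (size pi)).
have size_Q_lt : size Q < K by rewrite size_Q.
by exists (encoding k pi Q); split; [apply: encodes_encoding | apply: encoding_letters].
Qed.

Lemma nat_descent_false (g : nat -> nat) : ~ (forall n, g n.+1 < g n).
Proof.
move=> desc; have bound n : g n + n <= g 0.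
  by elim: n => [|n IH]; rewrite ?addn0 // addnS; apply: leq_trans IH; rewrite ltn_add2r.
by have := bound (g 0).+1; lia.
Qed.

Theorem mainTheorem7 (k K : nat) (hk : 0 < k) :
  wpo (fun pi => is_perm pi /\ al_lt pi K /\ s_lt k pi K).
Proof.
split=> [[f [Xf desc]]|[f [Xf anti]]].
  exact: (@nat_descent_false (size \o f) (fun n => strictly_below_size (Xf n).1 (desc n))).
have enc n : exists w, encodes w (f n) /\ over_alph (letters k (K ^ 3)) w.
  by have [pp [al]] := Xf n; rewrite /s_lt; case: (leqP k 1) => // k_gt1 sk; apply: encode.
pose w n := proj1_sig (constructive_indefinite_description _ (enc n)).
have w_spec n : encodes (w n) (f n) /\ over_alph (letters k (K ^ 3)) (w n).
  exact: proj2_sig (constructive_indefinite_description _ (enc n)).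
have [i [j [hij sub_ij]]] := higman (fun n => (w_spec n).2).
apply: (anti i j); first by apply/eqP; rewrite neq_ltn hij.
exact: encodes_subseq_contains (w_spec i).1 (w_spec j).1 sub_ij.
Qed.
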